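(* There exist an integer $K\ge1$, signs $\varepsilon_1,\dots,\varepsilon_K\in\{-1,1\}$ and labels $x_{1,k},x_{2,k}\in\{x^+,x^-,x^{\natural+},x^{\natural-}\}$ ($k=1,\dots,K$), such that, setting $\mathcal U(x^+)=\sum_{k=1}^K\varepsilon_k\,x_{1,k}^{\otimes 2}\otimes x_{2,k}^{\otimes2}$ (an order-4 tensor on $\mathbb R^{2n}$, where $x^-=Mx^+$), one has for all $x^+\in\mathbb R^{2n}$ $$f(x^+)=\Big\langle\sum_{i=1}^m(a_i^+)^{\otimes4},\ \mathcal U(x^+)\Big\rangle=c\,\langle\mathcal T,\mathcal U(x^+)\rangle.$$
   Context: Let $n,m\ge 1$, $a_1,\dots,a_m\in\mathbb C^n$ and $x^\natural\in\mathbb C^n$. For $a,b\in\mathbb C^n$ write $\langle a,b\rangle=\sum_{j}a_j\overline{b_j}$. Let $y_i=|\langle a_i,x^\natural\rangle|^2$. For $v\in\mathbb C^n$ put $v^+=(\mathrm{Re}\,v,\mathrm{Im}\,v)\in\mathbb R^{2n}$ and $v^-=Mv^+=(-\mathrm{Im}\,v,\mathrm{Re}\,v)$, where $M=\begin{bmatrix}0&-I_n\\ I_n&0\end{bmatrix}$. The map $x\mapsto x^+$ identifies $\mathbb C^n$ with $\mathbb R^{2n}$. Define $f:\mathbb R^{2n}\to\mathbb R$ by $f(x^+)=\sum_{i=1}^m\big(|\langle a_i,x\rangle|^2-y_i\big)^2$. Fix $\sigma>0$ (in the paper, $\sigma^2=\mathrm{Var}((a_i^+)_1)$ for random measurement vectors),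 set $c=m\sigma^4$ and $\mathcal T=\frac1c\sum_{i=1}^m(a_i^+)^{\otimes4}$. The inner product of order-4 tensors is the sum of entrywise products. *)

From mathcomp Require Import all_boot all_order all_algebra.
From mathcomp.real_closed Require Import complex.
Set Implicit Arguments.
Unset Strict Implicit.
Unset Printing Implicit Defensive.
Import Order.TTheory GRing.Theory Num.Theory.
Local Open Scope ring_scope.

Section PR.
Variable R : rcfType.
Variable n : nat.

Definition cinner (a b : 'rV[R[i]]_n) : R[i] :=
  \sum_(j < n) a 0 j * (b 0 j)^*%C.

Definition csqnorm (z : R[i]) : R := Normc.normc z ^+ 2.

Definition vplus (v : 'rV[R[i]]_n) : 'rV[R]_(n + n) :=
  row_mx (\row_j @complex.Re R (v 0 j)) (\row_j @complex.Im R (v 0 j)).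

Definition cvec (xp : 'rV[R]_(n + n)) : 'rV[R[i]]_n :=
  \row_j Complex (xp 0 (lshift n j)) (xp 0 (rshift n j)).

Definition Mmat : 'M[R]_(n + n) := block_mx 0 (- 1%:M) 1%:M 0.

Definition Mapp (w : 'rV[R]_(n + n)) : 'rV[R]_(n + n) := (Mmat *m w^T)^T.

Definition vminus (v : 'rV[R[i]]_n) : 'rV[R]_(n + n) := Mapp (vplus v).

Definition fobj (m : nat) (a : 'I_m -> 'rV[R[i]]_n) (xnat : 'rV[R[i]]_n)
  (xp : 'rV[R]_(n + n)) : R :=
  \sum_(i < m) (csqnorm (cinner (a i) (cvec xp)) - csqnorm (cinner (a i) xnat)) ^+ 2.

Definition tensor4 := 'I_(n + n) -> 'I_(n + n) -> 'I_(n + n) -> 'I_(n + n) -> R.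

Definition tinner (A B : tensor4) : R :=
  \sum_(i1 < n + n) \sum_(i2 < n + n) \sum_(i3 < n + n) \sum_(i4 < n + n)
     A i1 i2 i3 i4 * B i1 i2 i3 i4.

Definition tadd (A B : tensor4) : tensor4 := fun i j k l => A i j k l + B i j k l.
Definition tscale (c : R) (A : tensor4) : tensor4 := fun i j k l => c * A i j k l.
Definition tzero : tensor4 := fun _ _ _ _ => 0.
Definition tsum (I : finType) (F : I -> tensor4) : tensor4 :=
  fun i j k l => \sum_(s : I) F s i j k l.

Definition tpow4 (u : 'rV[R]_(n + n)) : tensor4 :=
  fun i j k l => u 0 i * u 0 j * u 0 k * u 0 l.

Definition tpow22 (u v : 'rV[R]_(n + n)) : tensor4 :=
  fun i j k l => u 0 i * u 0 j * v 0 k * v 0 l.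

End PR.

Inductive label := Lxp | Lxm | Lxnp | Lxnm.

Definition label_vec (R : rcfType) (n : nat) (l : label)
  (xp : 'rV[R]_(n + n)) (xnat : 'rV[R[i]]_n) : 'rV[R]_(n + n) :=
  match l with
  | Lxp => xp
  | Lxm => Mapp xp
  | Lxnp => vplus xnat
  | Lxnm => vminus xnat
  end.

Definition Utensor (R : rcfType) (n K : nat) (eps : 'I_K -> R)
  (l1 l2 : 'I_K -> label) (xnat : 'rV[R[i]]_n) (xp : 'rV[R]_(n + n)) : tensor4 R n :=
  tsum (fun k : 'I_K => tscale (eps k)
          (tpow22 (label_vec (l1 k) xp xnat) (label_vec (l2 k) xp xnat))).

(* For x^+ in R^{2n}, Re <a, x> = <a^+, x^+> and Im <a, x> = <a^+, x^->, so
   |<a, x>|^2 - |<a, x^nat>|^2 is a signed sum of four squares <a^+, v>^2 with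
   v in {x^+, x^-, x^nat+, x^nat-}.  Squaring it gives sixteen signed products
   <a^+, v1>^2 <a^+, v2>^2 = <(a^+)^{(x)4}, v1^{(x)2} (x) v2^{(x)2}>, and the
   identity follows by bilinearity of the tensor inner product. *)
From mathcomp Require Import all_boot all_order all_algebra.
From mathcomp.real_closed Require Import complex.
From mathcomp Require Import ring.
Set Implicit Arguments.
Unset Strict Implicit.
Unset Printing Implicit Defensive.
Import Order.TTheory GRing.Theory Num.Theory.
Local Open Scope ring_scope.

Lemma sqr_sum_divn_modn (R : pzSemiRingType) (F : nat -> R) (p : nat) :
  (\sum_(i < p) F i) ^+ 2 = \sum_(k < p * p) F (k %/ p)%N * F (k %% p)%N.
Proof.
rewrite expr2 big_distrlr.
rewrite -(big_mkord xpredT (fun k => F (k %/ p)%N * F (k %% p)%N)).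
rewrite big_nat_mul big_mkord; apply: eq_bigr => i _.
rewrite -[(i * p)%N]add0n big_addn mulSn addnK big_mkord; apply: eq_bigr => j _.
have p_gt0 : (0 < p)%N by apply: leq_ltn_trans (ltn_ord i).
by rewrite addnC divnMDl // modnMDl divn_small // addn0 modn_small.
Qed.

Section RealCoordinates.
Variables (R : rcfType) (n : nat).

Definition dot (u v : 'rV[R]_(n + n)) : R := \sum_(j < n + n) u 0 j * v 0 j.

Lemma dot_split (u v : 'rV[R]_(n + n)) :
  dot u v = \sum_(j < n) u 0 (lshift n j) * v 0 (lshift n j)
          + \sum_(j < n) u 0 (rshift n j) * v 0 (rshift n j).
Proof. exact: big_split_ord. Qed.

Lemma Re_sum (I : Type) (r : seq I) (P : pred I) (F : I -> R[i]) :
  complex.Re (\sum_(j <- r | P j) F j) = \sum_(j <- r | P j) complex.Re (F j).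
Proof. exact: (raddf_sum (@complex.Re R : Rcomplex R -> R)). Qed.

Lemma Im_sum (I : Type) (r : seq I) (P : pred I) (F : I -> R[i]) :
  complex.Im (\sum_(j <- r | P j) F j) = \sum_(j <- r | P j) complex.Im (F j).
Proof. exact: (raddf_sum (@complex.Im R : Rcomplex R -> R)). Qed.

Lemma csqnormE (z : R[i]) : csqnorm z = complex.Re z ^+ 2 + complex.Im z ^+ 2.
Proof. by case: z => a b; rewrite /csqnorm /= sqr_sqrtr // addr_ge0 ?sqr_ge0. Qed.

Lemma MappE (w : 'rV[R]_(n + n)) : Mapp w = row_mx (- rsubmx w) (lsubmx w).
Proof.
rewrite /Mapp /Mmat -{1}(hsubmxK w) tr_row_mx mul_block_col.
by rewrite !mul0mx mulNmx !mul1mx add0r addr0 tr_col_mx linearN /= !trmxK.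
Qed.

Lemma vplus_cvec (xp : 'rV[R]_(n + n)) : vplus (cvec xp) = xp.
Proof. by rewrite -[RHS]hsubmxK; congr row_mx; apply/rowP => j; rewrite !mxE. Qed.

Lemma csqnorm_cinner (a x : 'rV[R[i]]_n) :
  csqnorm (cinner a x)
  = dot (vplus a) (vplus x) ^+ 2 + dot (vplus a) (Mapp (vplus x)) ^+ 2.
Proof.
rewrite csqnormE /cinner Re_sum Im_sum MappE !dot_split /vplus row_mxKl row_mxKr.
by congr (_ ^+ 2 + _ ^+ 2); rewrite -big_split; apply: eq_bigr => j _;
  rewrite !row_mxEl !row_mxEr !mxE; case: (a 0 j) => p q; case: (x 0 j) => u v /=;
  ring.
Qed.

End RealCoordinates.

Section Tensors.
Variables (R : rcfType) (n : nat).
Implicit Types (A B : tensor4 R n) (u v w : 'rV[R]_(n + n)).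

Lemma tinnerC A B : tinner A B = tinner B A.
Proof. by rewrite /tinner; do 4!(apply: eq_bigr => ? _); rewrite mulrC. Qed.

Lemma tinner_tsuml (I : finType) (F : I -> tensor4 R n) B :
  tinner (tsum F) B = \sum_s tinner (F s) B.
Proof.
rewrite /tinner /tsum; do 4!(rewrite [RHS]exchange_big; apply: eq_bigr => ? _).
exact: big_distrl.
Qed.

Lemma tinner_tsumr (I : finType) A (G : I -> tensor4 R n) :
  tinner A (tsum G) = \sum_s tinner A (G s).
Proof. by rewrite tinnerC tinner_tsuml; apply: eq_bigr => s _; rewrite tinnerC. Qed.

Lemma tinner_tscalel e A B : tinner (tscale e A) B = e * tinner A B.
Proof.
rewrite /tinner /tscale; do 4!(rewrite mulr_sumr; apply: eq_bigr => ? _).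
by rewrite mulrA.
Qed.

Lemma tinner_tscaler e A B : tinner A (tscale e B) = e * tinner A B.
Proof. by rewrite tinnerC tinner_tscalel tinnerC. Qed.

Lemma tinner_tpow4_tpow22 w u v :
  tinner (tpow4 w) (tpow22 u v) = dot w u ^+ 2 * dot w v ^+ 2.
Proof.
rewrite /dot !expr2 -!mulrA big_distrl /tinner; apply: eq_bigr => i1 _.
rewrite big_distrl big_distrr; apply: eq_bigr => i2 _.
rewrite big_distrl !big_distrr; apply: eq_bigr => i3 _.
rewrite !big_distrr; apply: eq_bigr => i4 _.
by rewrite /tpow4 /tpow22 /=; ring.
Qed.

End Tensors.

Definition label_of_nat (k : nat) : label :=
  match k with 0 => Lxp | 1 => Lxm | 2 => Lxnp | _ => Lxnm end%N.

Definition label_sign (R : rcfType) (l : label) : R :=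
  match l with Lxp | Lxm => 1 | Lxnp | Lxnm => -1 end.

Section Labels.
Variables (R : rcfType) (n : nat) (a xnat : 'rV[R[i]]_n) (xp : 'rV[R]_(n + n)).

Let label_dot2 (l : nat) : R := dot (vplus a) (label_vec (label_of_nat l) xp xnat) ^+ 2.

Lemma csqnorm_cinner_diff :
  csqnorm (cinner a (cvec xp)) - csqnorm (cinner a xnat)
  = \sum_(l < 4) label_sign R (label_of_nat l) * label_dot2 l.
Proof.
rewrite !big_ord_recr big_ord0 /= /label_dot2 /=.
by rewrite !csqnorm_cinner vplus_cvec /vminus; ring.
Qed.

Lemma sqr_csqnorm_cinner_diff :
  (csqnorm (cinner a (cvec xp)) - csqnorm (cinner a xnat)) ^+ 2
  = \sum_(k < 4 * 4)
      label_sign R (label_of_nat (k %/ 4)) * label_sign R (label_of_nat (k %% 4))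
      * (label_dot2 (k %/ 4) * label_dot2 (k %% 4)).
Proof.
rewrite csqnorm_cinner_diff.
rewrite (sqr_sum_divn_modn (fun l => label_sign R (label_of_nat l) * label_dot2 l)).
by apply: eq_bigr => k _; rewrite mulrACA.
Qed.

End Labels.

Theorem proposition1 (R : rcfType) (n m : nat) (hn : (1 <= n)%N) (hm : (1 <= m)%N)
  (a : 'I_m -> 'rV[R[i]]_n) (xnat : 'rV[R[i]]_n) (sigma : R) (hsigma : 0 < sigma) :
  let c := m%:R * sigma ^+ 4 in
  let T := tscale c^-1 (tsum (fun i : 'I_m => tpow4 (vplus (a i)))) in
  exists (K : nat) (eps : 'I_K -> R) (l1 l2 : 'I_K -> label),
    (1 <= K)%N /\ (forall k, eps k = 1 \/ eps k = -1) /\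
    forall xp : 'rV[R]_(n + n),
      fobj a xnat xp
        = tinner (tsum (fun i : 'I_m => tpow4 (vplus (a i)))) (Utensor eps l1 l2 xnat xp)
      /\ tinner (tsum (fun i : 'I_m => tpow4 (vplus (a i)))) (Utensor eps l1 l2 xnat xp)
        = c * tinner T (Utensor eps l1 l2 xnat xp).
Proof.
move=> c T; pose l1 (k : 'I_(4 * 4)) := label_of_nat (k %/ 4).
pose l2 (k : 'I_(4 * 4)) := label_of_nat (k %% 4).
exists (4 * 4)%N, (fun k => label_sign R (l1 k) * label_sign R (l2 k)), l1, l2.
split=> //; split.
  move=> k; case: (l1 k); case: (l2 k); rewrite /= ?mulr1 ?mulrN1 ?opprK;
  by [left | right].
move=> xp; split; last first.
  have c_neq0 : c != 0 by rewrite mulf_neq0 ?pnatr_eq0 -?lt0n ?expf_neq0 ?gt_eqF.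
  by rewrite tinner_tscalel mulrA mulfV ?mul1r.
rewrite tinner_tsuml; apply: eq_bigr => i _.
rewrite sqr_csqnorm_cinner_diff tinner_tsumr; apply: eq_bigr => k _.
by rewrite tinner_tscaler tinner_tpow4_tpow22.
Qed.
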